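(* Let $G$ be a connected graph on more than one vertex. Then $\chi_{alg}(G)=2$ if and only if $\chi(G)=2$.
   Context: Graphs are finite, loopless, with symmetric edge sets; $K_c$ is the complete graph on $c$ vertices; $\chi(G)$ is the usual chromatic number. For $|I|=n$, $|O|=m$ ($O=\{0,\dots,m-1\}$), $\mathbb F(n,m)$ is the free product of $n$ copies of the cyclic group of order $m$ with generators $u_v$, $\mathbb C[\mathbb F(n,m)]$ its group $*$-algebra, $\omega=e^{2\pi i/m}$, $e_{v,a}=\frac1m\sum_{k=0}^{m-1}(\omega^{-a}u_v)^k$. For graphs $G,H$, the graph homomorphism game has $I=V(G)$, $O=V(H)$, $\lambda(v,w,a,b)=0$ iff ($v=w$, $a\ne b$) or ($(v,w)\in E(G)$, $(a,b)\notin E(H)$); $\mathcal I(G,H)$ is the two-sided $*$-ideal generated by $\{e_{v,a}e_{w,b}:\lambda(v,w,a,b)=0\}$, $\mathcal A(G,H)$ the quotient, and $\chi_{alg}(G)=\min\{c:\mathcal A(G,K_c)\ne0\}$. *)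

From HB Require Import structures.
From mathcomp Require Import all_boot all_order all_algebra.
From mathcomp Require Import fingraph.
From mathcomp Require Import complex.
From mathcomp Require Import reals trigo Rstruct.
Set Implicit Arguments. Unset Strict Implicit. Unset Printing Implicit Defensive.
Import Order.TTheory GRing.Theory Num.Theory.
Local Open Scope ring_scope.

Definition simple_graph (V : finType) (e : rel V) : Prop :=
  irreflexive e /\ symmetric e.

Definition connected_graph (V : finType) (e : rel V) : Prop :=
  forall x y : V, connect e x y.

Definition Kedge (c : nat) : rel 'I_c := fun a b => a != b.

Definition colorable (V : finType) (e : rel V) (c : nat) : Prop :=
  exists f : V -> 'I_c, forall x y, e x y -> Kedge (f x) (f y).

Definition is_chromatic_number (V : finType) (e : rel V) (c : nat) : Prop :=
  (0 < c)%N /\ colorable e c /\ (forall c', (0 < c')%N -> (c' < c)%N -> ~ colorable e c').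

Definition RR := Rdefinitions.R.
Definition CC := RR[i].

Definition omega (m : nat) : CC :=
  Complex (cos (2 * pi / m%:R : RR)) (sin (2 * pi / m%:R : RR)).

(* A word is a sequence of letters (v,k) standing for u_v^k.  Group elements
   of F(n,m) are the reduced words (exponents in 1..m-1, consecutive letters on
   distinct generators); [reduce] computes the reduced word equal (in F(n,m))
   to a given word, so that the group product of reduced words w1, w2 is
   reduce (w1 ++ w2). *)
Section FreeProd.
Variables (V : finType) (m : nat).

Definition word := seq (V * nat).

(* push a letter onto a reduced word stored in reverse order *)
Definition push (st : word) (l : V * nat) : word :=
  let k := (l.2 %% m)%N in
  if k == 0%N then st else
  match st with
  | (v', k') :: st' =>
      if v' == l.1 then
        let k2 := ((k' + k) %% m)%N in
        if k2 == 0%N then st' else (v', k2) :: st'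
      else (l.1, k) :: st
  | [::] => [:: (l.1, k)]
  end.

Definition reduce (w : word) : word := rev (foldl push [::] w).

Definition winv (w : word) : word :=
  rev [seq (l.1, (m - l.2 %% m)%N) | l <- w].

(* An element is a finite formal combination sum_j c_j w_j of words; two such
   expressions are the same element of C[F(n,m)] iff they have the same
   coefficient at every group element (reduced word). *)
Definition galg := seq (CC * word).

Definition coef (x : galg) (g : word) : CC :=
  \sum_(t <- x | reduce t.2 == g) t.1.

Definition galg_eq (x y : galg) : Prop := forall g : word, coef x g = coef y g.

Definition gone : galg := [:: (1, [::])].
Definition gadd (x y : galg) : galg := x ++ y.
Definition gsum (s : seq galg) : galg := flatten s.
Definition gmul (x y : galg) : galg :=
  [seq (a.1 * b.1, a.2 ++ b.2) | a <- x, b <- y].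
Definition gadj (x : galg) : galg := [seq (conjc a.1, winv a.2) | a <- x].

(* e_{v,a} = 1/m sum_{k=0}^{m-1} (omega^{-a} u_v)^k *)
Definition proj (v : V) (a : nat) : galg :=
  [seq ((omega m) ^- (a * k) / m%:R, [:: (v, k)]) | k <- iota 0 m].

End FreeProd.

(* lambda(v,w,a,b) = 0 *)
Definition lambda0 (V W : finType) (eG : rel V) (eH : rel W) (v w : V) (a b : W)
  : bool :=
  ((v == w) && (a != b)) || (eG v w && ~~ eH a b).

Definition ideal_gen (V : finType) (c : nat) (v w : V) (a b : 'I_c) (flag : bool)
  : galg V :=
  let p := gmul (proj c v a) (proj c w b) in
  if flag then @gadj V c p else p.

(* z lies in the two-sided *-ideal I(G,K_c) of C[F(|V|,c)] generated by the
   e_{v,a} e_{w,b} with lambda(v,w,a,b) = 0, i.e. z is a finite sum of terms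
   x * s * y with s a generator or the adjoint of a generator. *)
Definition in_ideal (V : finType) (e : rel V) (c : nat) (z : galg V) : Prop :=
  exists t : seq (galg V * (V * V * 'I_c * 'I_c * bool) * galg V),
    (forall s, s \in t ->
       lambda0 e (@Kedge c) s.1.2.1.1.1.1 s.1.2.1.1.1.2 s.1.2.1.1.2 s.1.2.1.2) /\
    @galg_eq V c z
      (gsum [seq gmul (gmul s.1.1
                 (@ideal_gen V c s.1.2.1.1.1.1 s.1.2.1.1.1.2 s.1.2.1.1.2 s.1.2.1.2 s.1.2.2))
                 s.2 | s <- t]).

(* A(G,K_c) = C[F(n,c)] / I(G,K_c) is nonzero iff 1 is not in the ideal *)
Definition A_nonzero (V : finType) (e : rel V) (c : nat) : Prop :=
  ~ @in_ideal V e c (gone V).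

Definition is_chi_alg (V : finType) (e : rel V) (c : nat) : Prop :=
  (0 < c)%N /\ A_nonzero e c /\
  (forall c', (0 < c')%N -> (c' < c)%N -> ~ A_nonzero e c').

(* A proper 2-colouring f yields the one-dimensional *-representation
   u_v |-> (-1)^(f v) of C[F(n,2)]; it sends e_{v,a} to [a = f v], hence kills
   every generator of I(G,K_2), so 1 is not in the ideal.
   Conversely, for every edge ab the ideal contains
   e_{a,0} e_{b,0} + e_{a,1} e_{b,1} = (1 + u_a u_b) / 2. Multiplied by
   +-u_r u_a with alternating signs along a walk from r, these telescope, and
   an odd closed walk through r, which exists when the connected graph G has no
   proper 2-colouring, produces u_r u_r = 1. With a single colour, both
   A(G,K_1) and the colourings vanish as soon as G has an edge. *)

From mathcomp Require Import all_boot all_order all_algebra.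
From mathcomp Require Import complex reals Rstruct trigo ring.
Set Implicit Arguments. Unset Strict Implicit. Unset Printing Implicit Defensive.
Import Order.TTheory GRing.Theory Num.Theory.
Local Open Scope ring_scope.

Lemma modn_subn_mod (m k : nat) : ((m - k %% m) %% m = (m.-1 * k) %% m)%N.
Proof.
case: m => [|n]; first by rewrite modn0 sub0n.
apply/eqP; rewrite -(eqn_modDr k).
have -> : (n.+1.-1 * k + k = k * n.+1)%N by rewrite mulnC -mulnSr.
rewrite modnMl {2}(divn_eq k n.+1) addnCA subnK; last exact/ltnW/ltn_pmod.
by rewrite -mulSnr modnMl.
Qed.

Section GroupCharacter.
Variables (V : finType) (m : nat) (s : V -> CC).
Hypothesis s_root : forall v, s v ^+ m = 1.
(* Unitarity, phrased so as to cover also m = 0, where [winv] zeroes exponents. *)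
Hypothesis s_conj : forall v, (s v)^*%C = s v ^+ m.-1.

Definition word_char (w : word V) : CC := \prod_(l <- w) s l.1 ^+ l.2.

Lemma expr_char_mod v k : s v ^+ k = s v ^+ (k %% m).
Proof. by rewrite {1}(divn_eq k m) exprD mulnC exprM s_root expr1n mul1r. Qed.

Lemma word_char_cons l w : word_char (l :: w) = s l.1 ^+ l.2 * word_char w.
Proof. by rewrite /word_char big_cons. Qed.

Lemma word_char_cat w1 w2 : word_char (w1 ++ w2) = word_char w1 * word_char w2.
Proof. by rewrite /word_char big_cat. Qed.

Lemma word_char_push st l : word_char (push m st l) = word_char st * s l.1 ^+ l.2.
Proof.
case: l => v k; rewrite /push /=.
case: eqP => [k0|_]; first by rewrite expr_char_mod k0 mulr1.
case: st => [|[v' k'] st]; first by rewrite /word_char big_seq1 big_nil mul1r -expr_char_mod.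
case: eqP => [<-|_]; last by rewrite !word_char_cons -expr_char_mod mulrC.
rewrite modnDmr; case: eqP => [k2_0|_].
  by rewrite word_char_cons mulrAC -exprD expr_char_mod k2_0 mul1r.
by rewrite !word_char_cons -expr_char_mod exprD mulrAC.
Qed.

Lemma word_char_reduce w : word_char (reduce m w) = word_char w.
Proof.
have push_foldl st u : word_char (foldl (push m) st u) = word_char st * word_char u.
  elim: u st => [|l u IH] st /=; first by rewrite /word_char big_nil mulr1.
  by rewrite IH word_char_push word_char_cons mulrA.
have word_char_rev u : word_char (rev u) = word_char u by rewrite /word_char big_rev.
by rewrite /reduce word_char_rev push_foldl /word_char big_nil mul1r.
Qed.

Lemma word_char_winv w : word_char (winv m w) = (word_char w)^*%C.
Proof.
rewrite /winv /word_char big_rev big_map rmorph_prod; apply: eq_bigr => -[v k] _ /=.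
rewrite (rmorphXn (conjc : {rmorphism CC -> CC})) /= s_conj -exprM.
by rewrite expr_char_mod [RHS]expr_char_mod modn_subn_mod.
Qed.

Definition galg_char (x : galg V) : CC := \sum_(t <- x) t.1 * word_char t.2.

Lemma galg_char_gone : galg_char (gone V) = 1.
Proof. by rewrite /galg_char big_seq1 /word_char big_nil mulr1. Qed.

Lemma galg_char_gsum xs : galg_char (gsum xs) = \sum_(x <- xs) galg_char x.
Proof.
elim: xs => [|x xs IH]; first by rewrite big_nil /galg_char big_nil.
by rewrite big_cons -IH /galg_char /gsum /= big_cat.
Qed.

Lemma galg_char_gmul x y : galg_char (gmul x y) = galg_char x * galg_char y.
Proof.
rewrite /galg_char /gmul big_allpairs_dep /= mulr_suml; apply: eq_bigr => a _.
by rewrite mulr_sumr; apply: eq_bigr => b _ /=; rewrite word_char_cat mulrACA.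
Qed.

Lemma galg_char_gadj x : galg_char (gadj m x) = (galg_char x)^*%C.
Proof.
rewrite /galg_char /gadj big_map rmorph_sum; apply: eq_bigr => a _ /=.
by rewrite rmorphM word_char_winv.
Qed.

Lemma galg_char_coef x (G : seq (word V)) : uniq G ->
  {subset [seq reduce m t.2 | t <- x] <= G} ->
  galg_char x = \sum_(g <- G) coef m x g * word_char g.
Proof.
move=> uniqG sub_xG; rewrite /galg_char /coef.
transitivity (\sum_(t <- x) \sum_(g <- G | reduce m t.2 == g) t.1 * word_char g).
  apply: eq_big_seq => t tx; rewrite -big_filter.
  have -> : [seq g <- G | reduce m t.2 == g] = [:: reduce m t.2].
    rewrite -(filter_pred1_uniq uniqG (sub_xG _ (map_f _ tx))).
    by apply: eq_filter => g /=; rewrite eq_sym.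
  by rewrite big_seq1 word_char_reduce.
under eq_bigr do rewrite big_mkcond.
rewrite exchange_big; apply: eq_bigr => g _.
rewrite mulr_suml [RHS]big_mkcond; apply: eq_bigr => t _.
by case: eqP => _; rewrite ?mul0r.
Qed.

Lemma galg_char_eq x y : galg_eq m x y -> galg_char x = galg_char y.
Proof.
move=> eq_xy; set G := undup [seq reduce m t.2 | t <- x ++ y].
have uniqG : uniq G := undup_uniq _.
rewrite (@galg_char_coef x G uniqG); last first.
  by move=> g gx; rewrite mem_undup map_cat mem_cat gx.
rewrite (@galg_char_coef y G uniqG); last first.
  by move=> g gy; rewrite mem_undup map_cat mem_cat gy orbT.
by apply: eq_bigr => g _; rewrite eq_xy.
Qed.

End GroupCharacter.

Lemma omega2 : omega 2 = -1.
Proof.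
rewrite /omega.
have -> : (2 * pi / 2%:R : RR) = pi by rewrite mulrC mulKf // pnatr_eq0.
by apply/eqP; rewrite eq_complex /= cospi sinpi oppr0 !eqxx.
Qed.

Section SignCharacter.
Variables (V : finType) (e : rel V) (f : V -> 'I_2).
Hypothesis f_proper : forall x y, e x y -> Kedge (f x) (f y).

Definition sign_of (v : V) : CC := (-1) ^+ f v.

Lemma sign_of_sqr v : sign_of v ^+ 2 = 1.
Proof. exact: sqrr_sign. Qed.

Lemma sign_of_conj v : (sign_of v)^*%C = sign_of v ^+ 2.-1.
Proof.
rewrite /sign_of (rmorphXn (conjc : {rmorphism CC -> CC})) /= expr1.
by congr (_ ^+ _); apply/eqP; rewrite eq_complex /= opprK oppr0 !eqxx.
Qed.

Lemma sign_char_proj v (a : 'I_2) : galg_char sign_of (proj 2 v a) = (a == f v)%:R.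
Proof.
rewrite /galg_char /proj big_map.
have -> : iota 0 2 = [:: 0%N; 1%N] by [].
rewrite big_cons big_seq1 /word_char !big_seq1 /= omega2 /sign_of.
rewrite !muln0 muln1 !expr0 !expr1 invr1 !mulr1.
case: a => [[|[|//]] ?]; case: (f v) => [[|[|//]] ?] /=; rewrite ?expr0 ?expr1 ?invrN1 ?mulN1r ?mul1r.
all: rewrite ?invr1 ?mul1r ?mulr1 ?mulrN1 ?opprK ?subrr //.
all: by rewrite -mulr2n -(mulr_natr (2^-1 : CC) 2) mulVf // pnatr_eq0.
Qed.

Lemma sign_char_ideal_gen v w a b flag : lambda0 e (@Kedge 2) v w a b ->
  galg_char sign_of (ideal_gen v w a b flag) = 0.
Proof.
move=> lambda_vwab.
have char_prod0 : galg_char sign_of (gmul (proj 2 v a) (proj 2 w b)) = 0.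
  rewrite galg_char_gmul !sign_char_proj.
  have [av|] := eqVneq a (f v); last by rewrite mul0r.
  case/orP: lambda_vwab => [/andP [/eqP <- ab] | /andP [evw]].
    by rewrite -av eq_sym (negbTE ab) mulr0.
  rewrite /Kedge negbK => /eqP <-.
  by have := f_proper evw; rewrite /Kedge -av => /negbTE ->; rewrite mulr0.
case: flag; rewrite /ideal_gen ?char_prod0 //.
by rewrite (galg_char_gadj sign_of_sqr sign_of_conj) char_prod0 conjc0.
Qed.

End SignCharacter.

Lemma colorable2_A_nonzero (V : finType) (e : rel V) : colorable e 2 -> A_nonzero e 2.
Proof.
case=> f f_proper [t [t_gen one_eq]].
have := galg_char_eq (sign_of_sqr f) one_eq.
rewrite galg_char_gone galg_char_gsum big_map big1_seq => [/eqP|s /andP [_ /t_gen] gen_s].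
  by rewrite oner_eq0.
by rewrite !galg_char_gmul (sign_char_ideal_gen f_proper _ gen_s) mulr0 mul0r.
Qed.

Definition ideal_witness (V : finType) (c : nat) : Type :=
  (galg V * (V * V * 'I_c * 'I_c * bool) * galg V)%type.

Definition ideal_term (V : finType) (c : nat) (s : ideal_witness V c) : galg V :=
  gmul (gmul s.1.1 (ideal_gen s.1.2.1.1.1.1 s.1.2.1.1.1.2 s.1.2.1.1.2 s.1.2.1.2 s.1.2.2)) s.2.

Definition admissible (V : finType) (e : rel V) (c : nat) (s : ideal_witness V c) : bool :=
  lambda0 e (@Kedge c) s.1.2.1.1.1.1 s.1.2.1.1.1.2 s.1.2.1.1.2 s.1.2.1.2.
Arguments admissible {V} e {c} s.

Lemma coefE (V : finType) (m : nat) (x : galg V) g :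
  coef m x g = \sum_(t <- x) (reduce m t.2 == g)%:R * t.1.
Proof. by rewrite /coef big_mkcond; apply: eq_bigr => t _; rewrite mulr_natl mulrb. Qed.

Lemma coef_cat (V : finType) (m : nat) (x y : galg V) g :
  coef m (x ++ y) g = coef m x g + coef m y g.
Proof. by rewrite /coef big_cat. Qed.

Lemma one_in_ideal1 (V : finType) (e : rel V) v w : e v w -> in_ideal e 1 (gone V).
Proof.
move=> evw; exists [:: (gone V, (v, w, ord0, ord0, false), gone V)]; split.
  by move=> s; rewrite inE => /eqP -> /=; rewrite /lambda0 evw /Kedge eqxx orbT.
move=> g; rewrite /coef /= !big_cons !big_nil /=.
have -> : reduce 1 [:: (v, 0%N); (w, 0%N)] = [::] by [].
by rewrite mul0n expr0 invr1 !mulr1.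
Qed.

Section RootedWalk.
Variables (V : finType) (e : rel V) (r : V).

Definition root_word (a : V) : word V := [:: (r, 1%N); (a, 1%N)].

Definition root_elt (a : V) : word V := reduce 2 (root_word a).

Lemma root_elt_root : root_elt r = [::].
Proof. by rewrite /root_elt /reduce /= /push /= eqxx. Qed.

Definition edge_terms (a b : V) (sg : CC) : seq (ideal_witness V 2) :=
  [:: ([:: (sg, root_word a)], (a, b, ord0, ord0, false), gone V);
      ([:: (sg, root_word a)], (a, b, ord_max, ord_max, false), gone V)].

Fixpoint walk_terms (a : V) (sg : CC) (p : seq V) : seq (ideal_witness V 2) :=
  if p is b :: p' then edge_terms a b sg ++ walk_terms b (- sg) p' else [::].

Lemma edge_terms_admissible a b sg : e a b -> all (admissible e) (edge_terms a b sg).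
Proof. by move=> eab; rewrite /= /admissible /lambda0 /= eab /Kedge !andbF. Qed.

Lemma walk_terms_admissible a sg p : path e a p -> all (admissible e) (walk_terms a sg p).
Proof.
elim: p a sg => [|b p IH] a sg // /andP [eab walk_p].
by rewrite all_cat edge_terms_admissible // IH.
Qed.

(* In C[F(n,2)], e_{a,0} e_{b,0} + e_{a,1} e_{b,1} = (1 + u_a u_b) / 2; left
   multiplication by u_r u_a turns it into (u_r u_a + u_r u_b) / 2. *)
Lemma coef_edge_terms a b sg g :
  coef 2 (gsum (map (@ideal_term V 2) (edge_terms a b sg))) g
  = sg / 2 * ((root_elt a == g)%:R + (root_elt b == g)%:R).
Proof.
have reduce_ab : reduce 2 (root_word a ++ [:: (a, 1%N); (b, 1%N)]) = root_elt b.
  rewrite /root_elt /reduce /=; case: (eqVneq r a) => [->|ra] /=; rewrite /push /= ?eqxx //.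
  by rewrite (negbTE ra) /= eqxx.
have reduce_a : reduce 2 (root_word a ++ [:: (a, 0%N); (b, 0%N)]) = root_elt a by [].
rewrite /gsum /= coefE !big_cons big_nil /= reduce_a reduce_ab omega2.
rewrite ?(mul0n, mul1n, muln0, muln1, expr0, expr1, invr1, invrN1).
have two_neq0 : (2 : CC) != 0 by rewrite pnatr_eq0.
by field.
Qed.

Lemma coef_walk_terms a sg p g :
  coef 2 (gsum (map (@ideal_term V 2) (walk_terms a sg p))) g
  = sg / 2 * (root_elt a == g)%:R
    - sg * (-1) ^+ size p / 2 * (root_elt (last a p) == g)%:R.
Proof.
elim: p a sg => [|b p IH] a sg; first by rewrite /coef big_nil expr0 mulr1 subrr.
have -> : walk_terms a sg (b :: p) = edge_terms a b sg ++ walk_terms b (- sg) p by [].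
rewrite map_cat /gsum flatten_cat coef_cat coef_edge_terms IH exprS.
have two_neq0 : (2 : CC) != 0 by rewrite pnatr_eq0.
by field.
Qed.

(* The walks [rcons px y] and [py] both end at [y], with opposite parities, so
   their [root_elt y] terms cancel. *)
Lemma one_in_ideal_of_walks x y px py :
  path e r px -> last r px = x -> path e r py -> last r py = y -> e x y ->
  odd (size px) = odd (size py) -> in_ideal e 2 (gone V).
Proof.
move=> walk_px last_px walk_py last_py exy odd_pxy.
exists (walk_terms r 1 (rcons px y) ++ walk_terms r 1 py); split.
  apply/allP; rewrite all_cat !walk_terms_admissible //.
  by rewrite rcons_path walk_px last_px exy.
move=> g; rewrite map_cat /gsum flatten_cat coef_cat !coef_walk_terms.
rewrite size_rcons last_rcons last_py exprS -signr_odd odd_pxy signr_odd.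
rewrite root_elt_root coefE big_seq1 /=.
have two_neq0 : (2 : CC) != 0 by rewrite pnatr_eq0.
by field.
Qed.

End RootedWalk.

Lemma colorable2_or_one_in_ideal (V : finType) (e : rel V) (r : V) :
  connected_graph e -> colorable e 2 \/ in_ideal e 2 (gone V).
Proof.
move=> e_connected.
have walk_to x : exists p, path e r p && (last r p == x).
  by case/connectP: (e_connected r x) => p walk_p last_p; exists p; rewrite walk_p last_p eqxx.
pose walk x := xchoose (walk_to x).
have /(_ _)/andP walkP x : path e r (walk x) && (last r (walk x) == x) := xchooseP (walk_to x).
pose parity x : 'I_2 := if odd (size (walk x)) then ord_max else ord0.
have [parity_proper|] := boolP [forall x, forall y, e x y ==> (parity x != parity y)].
  by left; exists parity => x y exy; move/forallP/(_ x)/forallP/(_ y)/implyP: parity_proper; apply.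
rewrite negb_forall => /existsP [x]; rewrite negb_forall => /existsP [y].
rewrite negb_imply negbK => /andP [exy parity_xy]; right.
have [walk_x /eqP last_x] := walkP x; have [walk_y /eqP last_y] := walkP y.
apply: (one_in_ideal_of_walks walk_x last_x walk_y last_y exy).
by move: parity_xy; rewrite /parity; case: odd; case: odd.
Qed.

Lemma A_nonzero2_iff_colorable2 (V : finType) (e : rel V) (r : V) :
  connected_graph e -> A_nonzero e 2 <-> colorable e 2.
Proof.
move=> e_connected; split; last exact: colorable2_A_nonzero.
by move=> A2_neq0; case: (colorable2_or_one_in_ideal r e_connected).
Qed.

Lemma not_A_nonzero1 (V : finType) (e : rel V) v w : e v w -> ~ A_nonzero e 1.
Proof. by move=> evw; apply; apply: one_in_ideal1 evw. Qed.

Lemma not_colorable1 (V : finType) (e : rel V) v w : e v w -> ~ colorable e 1.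
Proof. by move=> evw [f /(_ v w evw)]; rewrite /Kedge (ord1 (f v)) (ord1 (f w)) eqxx. Qed.

Lemma connected_edge (V : finType) (e : rel V) :
  connected_graph e -> (1 < #|V|)%N -> exists v w, e v w.
Proof.
move=> e_connected /card_gt1P [x [y [_ _ xy]]].
case/connectP: (e_connected x y) => [[|b p]] /=; first by move=> _ yx; rewrite yx eqxx in xy.
by case/andP => exb _ _; exists x, b.
Qed.

Theorem mainTheorem16 (V : finType) (e : rel V) :
  simple_graph e -> connected_graph e -> (1 < #|V|)%N ->
  (is_chi_alg e 2 <-> is_chromatic_number e 2).
Proof.
move=> _ e_connected V_gt1.
have [v [w evw]] := connected_edge e_connected V_gt1.
have chi2 := A_nonzero2_iff_colorable2 v e_connected.
have below2 (P : nat -> Prop) : ~ P 1%N -> forall c, (0 < c)%N -> (c < 2)%N -> ~ P c.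
  by move=> notP1 [|[|//]].
split=> -[_ [P2 _]]; do 2!split => //.
- exact/chi2.
- exact/below2/(not_colorable1 evw).
- exact/chi2.
- exact/below2/(not_A_nonzero1 evw).
Qed.
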